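(* Let $G$ be a graph with smallest eigenvalue $\theta_{\min}(G)$ which is $s$-integrable, and let $N$ be a $\rho\times|V(G)|$ integral matrix with $A(G)+\lceil-\theta_{\min}(G)\rceil I=\frac{1}{s}N^TN$ (rows of $N$ are vectors indexed by $V(G)$). Then: \begin{enumerate} \item There is a row $\mathbf{r}$ of $N$ with $$|{\rm supp}(\mathbf{r})|\leq\frac{s\lceil-\theta_{\min}(G)\rceil\,|V(G)|}{\rho}\leq\frac{s\lceil-\theta_{\min}(G)\rceil\,|V(G)|}{{\rm rank}(N)}.$$ \item Let $\pi=\{V_1,\ldots,V_p\}$ be an equitable partition of $V(G)$ whose quotient matrix $Q_\pi$ has $\theta_{\min}(G)$ as its smallest eigenvalue. If $\theta_{\min}(G)$ is an integer, then for every row $\mathbf{r}$ of $N$ and every eigenvector $\mathbf{u}=(\mathbf{u}_1,\ldots,\mathbf{u}_p)^T$ of $Q_\pi$ with eigenvalue $\theta_{\min}(G)$, $$\sum_{i=1}^p\mathbf{u}_i\sum_{x\in V_i}\mathbf{r}_x=0.$$ \item For every row $\mathbf{r}$ of $N$, $$\sum_{x\in V(G)}\mathbf{r}_x\sum_{y\sim x}\mathbf{r}_y\;\geq\;\frac{1}{s}(\mathbf{r}\mathbf{r}^T)^2+\lfloor\theta_{\min}(G)\rfloor\,\mathbf{r}\mathbf{r}^T.$$ \item If $G'$ is an induced subgraph of $G$ with $\lfloor\theta_{\min}(G')\rfloor=\lfloor\theta_{\min}(G)\rfloor$, then $G'$ is also $s$-integrable. \end{enumerate}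
   Context: Graphs are finite, simple, undirected; $A(G)$ is the adjacency matrix and $\theta_{\min}(G)$ the smallest eigenvalue; $x\sim y$ means adjacency. ${\rm supp}(\mathbf{r})=\{i\mid \mathbf{r}_i\neq 0\}$. A graph $G$ is $s$-integrable ($s$ a positive integer) if there is an integral matrix $N$ with $A(G)-\lfloor\theta_{\min}(G)\rfloor I=\frac{1}{s}N^TN$ (equivalently, the lattice with Gram matrix $A(G)-\lfloor\theta_{\min}(G)\rfloor I$ scaled by $\sqrt{s}$ embeds in a standard lattice $\mathbb{Z}^m$). A partition $\pi=\{V_1,\ldots,V_p\}$ of $V(G)$ is equitable if for all $i,j$ every vertex of $V_i$ has the same number $q_{i,j}$ of neighbours in $V_j$; its quotient matrix is $Q_\pi=(q_{i,j})$. *)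

From HB Require Import structures.
From mathcomp Require Import all_boot all_order all_algebra.
From mathcomp Require Import reals.
Set Implicit Arguments. Unset Strict Implicit. Unset Printing Implicit Defensive.
Import Order.TTheory GRing.Theory Num.Theory.
Local Open Scope ring_scope.

Definition simple_graph (n : nat) (e : rel 'I_n) : Prop :=
  symmetric e /\ irreflexive e.

Definition adj_mx (R : realType) (n : nat) (e : rel 'I_n) : 'M[R]_n :=
  \matrix_(i, j) (e i j)%:R.

Definition is_min_eigenvalue (R : realType) (n : nat) (M : 'M[R]_n) (theta : R) : Prop :=
  eigenvalue M theta /\ (forall a : R, eigenvalue M a -> theta <= a).

Definition s_integrable (R : realType) (n : nat) (e : rel 'I_n) (s : nat) : Prop :=
  exists theta : R, is_min_eigenvalue (adj_mx R e) theta /\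
    exists (m : nat) (N : 'M[int]_(m, n)),
      adj_mx R e - ((Num.floor theta)%:~R)%:M
      = (s%:R)^-1 *: map_mx (fun z : int => z%:~R) (N^T *m N).

Definition supp (n : nat) (r : 'rV[int]_n) : {set 'I_n} := [set x | r 0 x != 0].

Definition is_partition (n p : nat) (f : 'I_n -> 'I_p) : Prop :=
  forall i : 'I_p, exists x : 'I_n, f x = i.

Definition nbrs_in (n p : nat) (e : rel 'I_n) (f : 'I_n -> 'I_p) (x : 'I_n) (j : 'I_p) : nat :=
  #|[set y | e x y & f y == j]|.

Definition equitable (n p : nat) (e : rel 'I_n) (f : 'I_n -> 'I_p) : Prop :=
  forall (i j : 'I_p) (x y : 'I_n), f x = i -> f y = i -> nbrs_in e f x j = nbrs_in e f y j.

Definition quotient_mx (R : realType) (n p : nat) (e : rel 'I_n) (f : 'I_n -> 'I_p) : 'M[R]_p :=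
  \matrix_(i, j) (if [pick x | f x == i] is Some x then (nbrs_in e f x j)%:R else 0).

From HB Require Import structures.
From mathcomp Require Import all_boot all_order all_algebra.
From mathcomp Require Import reals.
Set Implicit Arguments. Unset Strict Implicit. Unset Printing Implicit Defensive.
Import Order.TTheory GRing.Theory Num.Theory.
Local Open Scope ring_scope.

(* Put C = ceil(-theta), so that floor(theta) = -C and the hypothesis reads
   N^T N = s (A + C I).  Taking traces, the sum of squares of the entries of N
   is s C |V|; every nonzero integer entry contributes at least 1, so some row
   has at most the average support.  If theta is an integer then theta = -C,
   and an eigenvector of A for theta (for instance the lift of an eigenvector
   of Q_pi along an equitable partition) lies in the kernel of N^T N, hence of
   N.  For a row r of N, r A r^T = |N r^T|^2 / s - C |r|^2 and the entry of
   N r^T at r itself is |r|^2.  Deleting the columns of N outside an induced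
   subgraph restricts the Gram identity to that subgraph. *)

Section SquaredNorm.
Variable R : realFieldType.

Definition sqnorm m n (M : 'M[R]_(m, n)) : R := \sum_i \sum_j M i j ^+ 2.

Lemma sqnorm_ge0 m n (M : 'M[R]_(m, n)) : 0 <= sqnorm M.
Proof. by apply: sumr_ge0 => i _; apply: sumr_ge0 => j _; exact: sqr_ge0. Qed.

Lemma mxtrace_trmx_mul m n (M : 'M[R]_(m, n)) : \tr (M^T *m M) = sqnorm M.
Proof.
rewrite /mxtrace /sqnorm exchange_big; apply: eq_bigr => j _; rewrite mxE.
by apply: eq_bigr => i _; rewrite mxE expr2.
Qed.

Lemma sqnorm_rows m n (M : 'M[R]_(m, n)) : sqnorm M = \sum_i sqnorm (row i M).
Proof.
by apply: eq_bigr => i _; rewrite /sqnorm big_ord1; apply: eq_bigr => j _; rewrite mxE.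
Qed.

Lemma sqr_entry_le_sqnorm m n (M : 'M[R]_(m, n)) i j : M i j ^+ 2 <= sqnorm M.
Proof.
have sqr_le_row k : M k j ^+ 2 <= \sum_l M k l ^+ 2.
  by rewrite (bigD1 j) //= lerDl; apply: sumr_ge0 => l _; exact: sqr_ge0.
apply: le_trans (sqr_le_row i) _; rewrite /sqnorm (bigD1 i) //= lerDl.
by apply: sumr_ge0 => k _; apply: le_trans (sqr_le_row k); exact: sqr_ge0.
Qed.

Lemma sqnorm_eq0 m n (M : 'M[R]_(m, n)) : sqnorm M = 0 -> M = 0.
Proof.
move=> M0; apply/matrixP => i j; rewrite mxE; apply/eqP.
by rewrite -sqrf_eq0 eq_le sqr_ge0 andbT -M0 sqr_entry_le_sqnorm.
Qed.

Lemma mulmx_trmx_eq0 m n p (M : 'M[R]_(m, n)) (w : 'M[R]_(n, p)) :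
  M^T *m M *m w = 0 -> M *m w = 0.
Proof.
move=> MMw0; apply: sqnorm_eq0; rewrite -mxtrace_trmx_mul trmx_mul.
by rewrite -mulmxA (mulmxA M^T) MMw0 mulmx0 mxtrace0.
Qed.

Lemma sqnorm_div_rows_le_div_rank m n (M : 'M[R]_(m, n)) :
  sqnorm M / m%:R <= sqnorm M / (\rank M)%:R.
Proof.
have [/eqP|rank_gt0] := posnP (\rank M).
  by rewrite mxrank_eq0 => /eqP->; rewrite -mxtrace_trmx_mul mulmx0 mxtrace0 !mul0r.
have rank_le_rows := rank_leq_row M.
rewrite ler_wpM2l ?sqnorm_ge0 // lef_pV2 ?posrE ?ltr0n ?ler_nat //.
exact: leq_trans rank_le_rows.
Qed.

End SquaredNorm.

Lemma exists_le_mean (R : realFieldType) m (F : 'I_m -> R) :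
  (0 < m)%N -> exists i, F i <= (\sum_j F j) / m%:R.
Proof.
move=> m_gt0; have [i _ Fi_min] := arg_minP F (i0 := Ordinal m_gt0) (P := xpredT) isT.
exists i; rewrite ler_pdivlMr ?ltr0n // -[m in m%:R]card_ord mulr_natr -sumr_const.
by apply: ler_sum => j _; exact: Fi_min.
Qed.

Lemma card_supp_le_sqnorm (R : realFieldType) n (r : 'rV[int]_n) :
  (#|supp r|%:R : R) <= sqnorm (map_mx (fun z : int => z%:~R) r).
Proof.
rewrite /sqnorm big_ord1 /supp -sum1_card natr_sum big_mkcond /=.
apply: ler_sum => x _; rewrite inE !mxE.
have [-> | r_nz] := eqVneq (r 0 x) 0; first by rewrite sqr_ge0.
by rewrite -rmorphXn ler1z -gtz0_ge1 lt0r sqrf_eq0 r_nz sqr_ge0.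
Qed.

Lemma mulmx_rowsub_sum (R : comPzRingType) m n p (M : 'M[R]_(m, n))
    (f : 'I_n -> 'I_p) (u : 'cV[R]_p) k :
  (M *m rowsub f u) k 0 = \sum_i u i 0 * \sum_(x | f x == i) M k x.
Proof.
rewrite mxE (partition_big f xpredT) //=; apply: eq_bigr => i _.
by rewrite mulr_sumr; apply: eq_bigr => x /eqP fx; rewrite mxE fx mulrC.
Qed.

Lemma mxtrace_adj_mx (R : realType) n (e : rel 'I_n) :
  irreflexive e -> \tr (adj_mx R e) = 0.
Proof. by move=> e_irr; rewrite /mxtrace big1 // => x _; rewrite mxE e_irr. Qed.

Lemma quad_form_adj_mxE (R : realType) n (e : rel 'I_n) (r : 'rV[R]_n) :
  \sum_x r 0 x * \sum_(y | e x y) r 0 y = (r *m adj_mx R e *m r^T) 0 0.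
Proof.
rewrite -mulmxA mxE; apply: eq_bigr => x _; rewrite !mxE big_mkcond /=.
congr (_ * _); apply: eq_bigr => y _; rewrite !mxE.
by case: (e x y); rewrite ?mul1r ?mul0r.
Qed.

Section GramRepresentation.
Variables (R : realType) (n rho s : nat) (e : rel 'I_n) (c : R) (N : 'M[R]_(rho, n)).
Hypotheses (s_gt0 : (0 < s)%N) (gramN : adj_mx R e + c%:M = s%:R^-1 *: (N^T *m N)).

Let s_neq0 : s%:R != 0 :> R. Proof. by rewrite pnatr_eq0 -lt0n. Qed.

Lemma gram_eq : N^T *m N = s%:R *: (adj_mx R e + c%:M).
Proof. by rewrite gramN scalerA divff // scale1r. Qed.

Lemma sqnorm_gram : irreflexive e -> sqnorm N = (s * n)%:R * c.
Proof.
move=> e_irr; rewrite -mxtrace_trmx_mul gram_eq mxtraceZ mxtraceD.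
by rewrite mxtrace_adj_mx // add0r mxtrace_scalar natrM mulr_natr mulrnAr mulrnAl.
Qed.

Lemma gram_kernel (p : nat) (w : 'M[R]_(n, p)) :
  adj_mx R e *m w = - c *: w -> N *m w = 0.
Proof.
move=> Aw; apply: mulmx_trmx_eq0.
by rewrite gram_eq -scalemxAl mulmxDl Aw mul_scalar_mx -scalerDl addNr !scale0r scaler0.
Qed.

Lemma quad_form_gram (r : 'rV[R]_n) :
  (r *m adj_mx R e *m r^T) 0 0 = s%:R^-1 * sqnorm (N *m r^T) - c * (r *m r^T) 0 0.
Proof.
have -> : adj_mx R e = s%:R^-1 *: (N^T *m N) - c%:M by rewrite -gramN addrK.
rewrite mulmxBr mulmxBl -scalemxAr -scalemxAl mul_mx_scalar -scalemxAl.
rewrite mxE [X in X + _]mxE [X in _ + X]mxE [X in _ - X]mxE.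
by rewrite -mxtrace_trmx_mul trace_mx11 trmx_mul trmxK !mulmxA.
Qed.

Lemma quad_form_row_ge (k : 'I_rho) (r := row k N) :
  s%:R^-1 * (r *m r^T) 0 0 ^+ 2 - c * (r *m r^T) 0 0 <= (r *m adj_mx R e *m r^T) 0 0.
Proof.
rewrite quad_form_gram lerD2r ler_wpM2l ?invr_ge0 ?ler0n //.
by rewrite -[r *m _]row_mul mxE sqr_entry_le_sqnorm.
Qed.

Lemma gram_induced m (g : 'I_m -> 'I_n) : injective g ->
  adj_mx R (fun a b => e (g a) (g b)) + c%:M
    = s%:R^-1 *: ((colsub g N)^T *m colsub g N).
Proof.
move=> g_inj; rewrite trmx_mxsub -mxsub_mul gram_eq linearZ scalerA mulVf // scale1r.
by apply/matrixP => a b; rewrite !mxE (inj_eq g_inj).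
Qed.

End GramRepresentation.

Section EquitablePartition.
Variables (R : realType) (n p : nat) (e : rel 'I_n) (f : 'I_n -> 'I_p).
Hypothesis f_eq : equitable e f.

Lemma quotient_mxE x i : quotient_mx R e f (f x) i = (nbrs_in e f x i)%:R.
Proof.
rewrite mxE; case: pickP => [y /eqP fy | /(_ x)]; last by rewrite eqxx.
by rewrite (@f_eq _ i y x fy erefl).
Qed.

Lemma adj_mx_rowsub_equitable k (u : 'M[R]_(p, k)) :
  adj_mx R e *m rowsub f u = rowsub f (quotient_mx R e f *m u).
Proof.
apply/matrixP => x j; rewrite !mxE (partition_big f xpredT) //=.
apply: eq_bigr => i _; rewrite quotient_mxE /nbrs_in -sum1_card natr_sum mulr_suml.
rewrite [RHS]big_mkcond [LHS]big_mkcond /=; apply: eq_bigr => y _; rewrite !mxE inE.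
by case: eqP => [<-|] //=; case: (e x y); rewrite ?mul1r ?mul0r.
Qed.

End EquitablePartition.


Theorem proposition3p1 (R : realType) (n : nat) (e : rel 'I_n) (s : nat)
    (theta : R) (rho : nat) (N : 'M[int]_(rho, n)) :
  simple_graph e -> (0 < s)%N ->
  is_min_eigenvalue (adj_mx R e) theta ->
  s_integrable R e s ->
  adj_mx R e + ((Num.ceil (- theta))%:~R)%:M
    = (s%:R)^-1 *: map_mx (fun z : int => z%:~R) (N^T *m N) ->
  (* 1 *)
  ((0 < rho)%N ->
    exists k : 'I_rho,
      ((#|supp (row k N)|%:R : R) <= (s * n)%:R * (Num.ceil (- theta))%:~R / rho%:R) /\
      (((s * n)%:R * (Num.ceil (- theta))%:~R / rho%:R : R)
         <= (s * n)%:R * (Num.ceil (- theta))%:~R / (\rank (map_mx (fun z : int => z%:~R) N : 'M[R]_(rho, n)))%:R))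
  /\
  (* 2 *)
  (forall (p : nat) (f : 'I_n -> 'I_p),
     is_partition f -> equitable e f ->
     is_min_eigenvalue (quotient_mx R e f) theta ->
     theta \is a Num.int ->
     forall (k : 'I_rho) (u : 'cV[R]_p),
       u != 0 -> quotient_mx R e f *m u = theta *: u ->
       \sum_(i < p) u i 0 * \sum_(x < n | f x == i) (N k x)%:~R = 0)
  /\
  (* 3 *)
  (forall k : 'I_rho,
     let r : 'rV[R]_n := map_mx (fun z : int => z%:~R) (row k N) in
     let rr : R := (r *m r^T) 0 0 in
     \sum_(x < n) r 0 x * \sum_(y < n | e x y) r 0 y
       >= (s%:R)^-1 * rr ^+ 2 + (Num.floor theta)%:~R * rr)
  /\
  (* 4 *)
  (forall (m : nat) (g : 'I_m -> 'I_n) (theta' : R),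
     injective g ->
     is_min_eigenvalue (adj_mx R (fun a b => e (g a) (g b))) theta' ->
     Num.floor theta' = Num.floor theta ->
     s_integrable R (fun a b => e (g a) (g b)) s).
Proof.
move=> [_ e_irr] s_gt0 _ _ gramN.
set C : R := (Num.ceil (- theta))%:~R.
set Nr : 'M[R]_(rho, n) := map_mx (fun z : int => z%:~R) N.
have gramNr : adj_mx R e + C%:M = s%:R^-1 *: (Nr^T *m Nr).
  by rewrite gramN map_mxM map_trmx.
have floor_theta : (Num.floor theta)%:~R = - C :> R by rewrite floorNceil intrN.
have rowNr k : map_mx (fun z : int => z%:~R) (row k N) = row k Nr by rewrite map_row.
split; [|split; [|split]].
- move=> rho_gt0; rewrite -(sqnorm_gram s_gt0 gramNr e_irr).
  have [k min_k] := exists_le_mean (fun k => sqnorm (row k Nr)) rho_gt0.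
  exists k; split; last exact: sqnorm_div_rows_le_div_rank.
  by rewrite sqnorm_rows; apply: le_trans min_k; rewrite -rowNr card_supp_le_sqnorm.
- move=> p f _ f_eq _ theta_int k u _ Qu.
  have C_eq : C = - theta by rewrite /C ceilK ?rpredN.
  have Au : adj_mx R e *m rowsub f u = - C *: rowsub f u.
    by rewrite adj_mx_rowsub_equitable // Qu C_eq opprK linearZ.
  have /matrixP/(_ k 0) := gram_kernel s_gt0 gramNr Au.
  rewrite mulmx_rowsub_sum mxE => Nw0; rewrite -[RHS]Nw0; apply: eq_bigr => i _.
  by congr (_ * _); apply: eq_bigr => x _; rewrite mxE.
- move=> k /=; rewrite rowNr quad_form_adj_mxE floor_theta mulNr.
  exact: quad_form_row_ge.
- move=> m g theta' g_inj min_theta' floor_theta'.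
  exists theta'; split => //; exists rho, (colsub g N).
  rewrite floor_theta' floorNceil intrN raddfN opprK map_mxM -map_trmx !map_mxsub.
  exact: gram_induced.
Qed.
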